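(* Consider the $[\![15,7,3]\!]$ Hamming code and the qubit permutation $\sigma_3 = (1,10,15,3,8,13)(4,6)(5,12,11)(7,14,9)$. Let $U = \prod_{i:\,\sigma_3(i)\ne i}\mathrm{CZ}_{i,\sigma_3(i)}$ (so the two gates from the 2-cycle $(4,6)$ cancel). Then there is a product $P$ of Pauli $Z$ operators such that $PU$ preserves the code space, and, up to a logical Pauli operator and global phase, $PU$ acts on the code space as the product of logical $\mathrm{CZ}$ gates $\overline{\mathrm{CZ}}_{2,3}\overline{\mathrm{CZ}}_{3,4}\overline{\mathrm{CZ}}_{4,5}\overline{\mathrm{CZ}}_{5,6}\overline{\mathrm{CZ}}_{6,7}\overline{\mathrm{CZ}}_{7,2}$ (logical $\mathrm{CZ}$ gates following the cycle $(2,3,4,5,6,7)$, with logical qubit 1 untouched).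
   Context: The $[\![15,7,3]\!]$ Hamming code: index physical qubits $1,\dots,15$, and for $b\in\{1,2,4,8\}$ let $R_b = \{i\in\{1,\dots,15\} : \text{the binary expansion of } i \text{ contains } b\}$. The stabilizer group is generated by $X_{R_b}$ and $Z_{R_b}$, $b\in\{1,2,4,8\}$. Logical operators are $\bar X_j = X_{T_j}$, $\bar Z_j = Z_{T_j}$ with $T_1=\{1,2,4,8,15\}$, $T_2=\{1,2,5,10,12\}$, $T_3=\{1,2,6,11,14\}$, $T_4=\{1,2,7,9,13\}$, $T_5=\{1,4,6,9,10\}$, $T_6=\{1,4,7,12,14\}$, $T_7=\{1,8,10,13,14\}$. $\mathrm{CZ}_{a,b} = \mathbb 1 - 2|11\rangle\langle 11|$ on qubits $a,b$. *)

From HB Require Import structures.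
From mathcomp Require Import all_boot all_order all_algebra all_field.
Set Implicit Arguments. Unset Strict Implicit. Unset Printing Implicit Defensive.
Import GRing.Theory Num.Theory.
Local Open Scope ring_scope.

(* Physical qubit k (1 <= k <= 15) is the ordinal (k-1 : 'I_15);
   logical qubit j (1 <= j <= 7) is the ordinal (j-1 : 'I_7). *)
Definition bits := {ffun 'I_15 -> bool}.
Definition state := {ffun bits -> algC}.
Definition op := state -> state.

Definition pq (k : nat) : 'I_15 := inord k.-1.
Definition lq (j : nat) : 'I_7 := inord j.-1.

Definition flip (A : {set 'I_15}) (x : bits) : bits := [ffun i => x i (+) (i \in A)].
Definition Xop (A : {set 'I_15}) : op := fun psi => [ffun x : bits => psi (flip A x)].
Definition Zop (A : {set 'I_15}) : op :=
  fun psi => [ffun x : bits => (-1) ^+ #|[set i in A | x i]| * psi x].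
Definition CZop (a b : 'I_15) : op :=
  fun psi => [ffun x : bits => (if x a && x b then -1 else 1) * psi x].

Definition scale (c : algC) : op := fun psi => [ffun x : bits => c * psi x].
Definition addop (f g : op) : op := fun psi => [ffun x : bits => f psi x + g psi x].

(* R_b = { i in 1..15 | binary expansion of i contains b } *)
Definition Rset (b : nat) : {set 'I_15} := [set i : 'I_15 | odd (i.+1 %/ b)%N].

Definition in_code (psi : state) : Prop :=
  forall b, b \in [:: 1; 2; 4; 8]%N -> Xop (Rset b) psi = psi /\ Zop (Rset b) psi = psi.

Definition Tlist (j : nat) : seq nat :=
  match j with
  | 1 => [:: 1; 2; 4; 8; 15]
  | 2 => [:: 1; 2; 5; 10; 12]
  | 3 => [:: 1; 2; 6; 11; 14]
  | 4 => [:: 1; 2; 7; 9; 13]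
  | 5 => [:: 1; 4; 6; 9; 10]
  | 6 => [:: 1; 4; 7; 12; 14]
  | 7 => [:: 1; 8; 10; 13; 14]
  | _ => [::]
  end%N.
Definition Tset (j : 'I_7) : {set 'I_15} := [set i : 'I_15 | (i.+1 \in Tlist j.+1)%N].

Definition logX (j : 'I_7) : op := Xop (Tset j).
Definition logZ (j : 'I_7) : op := Zop (Tset j).

Definition lpauli (ax az : {set 'I_7}) : op :=
  foldr (fun j f => fun psi =>
           (if j \in ax then logX j else id) ((if j \in az then logZ j else id) (f psi)))
        id (enum 'I_7).

Definition logCZ (a b : 'I_7) : op := fun psi =>
  [ffun x : bits => 2^-1 * (psi x + logZ a psi x + logZ b psi x - logZ a (logZ b psi) x)].

Definition targetCZ : op := fun psi =>
  logCZ (lq 2) (lq 3) (logCZ (lq 3) (lq 4) (logCZ (lq 4) (lq 5)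
    (logCZ (lq 5) (lq 6) (logCZ (lq 6) (lq 7) (logCZ (lq 7) (lq 2) psi))))).

Definition sig3_nat (n : nat) : nat :=
  match n with
  | 1 => 10 | 10 => 15 | 15 => 3 | 3 => 8 | 8 => 13 | 13 => 1
  | 4 => 6 | 6 => 4
  | 5 => 12 | 12 => 11 | 11 => 5
  | 7 => 14 | 14 => 9 | 9 => 7
  | k => k
  end%N.
Definition sigma3 (i : 'I_15) : 'I_15 := pq (sig3_nat i.+1).

Definition Uop : op := fun psi =>
  [ffun x : bits => (\prod_(i : 'I_15 | sigma3 i != i)
                (if x i && x (sigma3 i) then -1 else 1)) * psi x].

(* Every operator involved is diagonal in the computational basis: each acts as
   |x> |-> (-1)^(f x) |x> for a Boolean phase function f.  A state of the code is
   supported on the classical Hamming codewords and invariant under the flips by the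
   stabilizer supports R_b.  So it suffices that (i) the phase of Z_A U and that of the
   logical CZ cycle agree on the 2^11 codewords, a finite check, and (ii) the latter is
   invariant under the R_b-flips, which holds because every logical support T_j meets
   every R_b in an even number of qubits. *)
From mathcomp Require Import all_boot all_order all_algebra all_field ring.
Import GRing.Theory Num.Theory.
Local Open Scope ring_scope.

Definition diag (f : bits -> bool) : op := fun psi => [ffun x => (-1) ^+ f x * psi x].

Lemma diag_comp f g psi : diag f (diag g psi) = diag (fun x => f x (+) g x) psi.
Proof. by apply/ffunP => x; rewrite !ffunE mulrA signr_addb. Qed.

Lemma prod_sign_card (R : pzRingType) (I : finType) (P c : pred I) :
  \prod_(i | P i) (if c i then -1 else 1) = (-1) ^+ #|[set i | P i && c i]| :> R.
Proof.
rewrite (eq_bigr (fun i => (-1) ^+ c i)); last by move=> i _; case: (c i).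
rewrite prodrXr -sum1dep_card big_mkcondr /=.
by congr (_ ^+ _); apply: eq_bigr => i _; case: (c i).
Qed.

Lemma card_ord_count n (S : {set 'I_n}) (m : pred nat) :
  (forall i : 'I_n, (i \in S) = m i) -> #|S| = count m (iota 0 n).
Proof.
move=> Sm; rewrite cardE /enum_mem size_filter -val_enum_ord count_map enumT.
by apply: eq_count => i; rewrite /= Sm.
Qed.

Lemma odd_count_addb (T : Type) (p q : pred T) (s : seq T) :
  odd (count (fun t => p t (+) q t) s) = odd (count p s) (+) odd (count q s).
Proof.
elim: s => //= t s IH; rewrite !oddD IH !oddb.
by case: (p t) (q t) (odd (count p s)) (odd (count q s)) => [] [] [] [].
Qed.

(* Phases are computed on bit strings [pred nat], with qubit k+1 at index k, because
   these reduce under [vm_compute] while cardinals of finsets do not. *)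
Definition bit_at (x : bits) : pred nat := nth false (fgraph x).

Lemma bit_atE x (i : 'I_15) : bit_at x i = x i.
Proof. exact: nth_fgraph_ord. Qed.

Definition parity_in (m y : pred nat) : bool := odd (count (predI m y) (iota 0 15)).

Lemma ZopE (S : {set 'I_15}) (m : pred nat) psi :
  (forall i : 'I_15, (i \in S) = m i) ->
  Zop S psi = diag (fun x => parity_in m (bit_at x)) psi.
Proof.
move=> Sm; apply/ffunP => x; rewrite !ffunE -signr_odd.
by rewrite (@card_ord_count _ _ (predI m (bit_at x))) // => i; rewrite !inE Sm bit_atE.
Qed.

Definition sigma3_idx (k : nat) : nat := (sig3_nat k.+1).-1.

Lemma sigma3E (i : 'I_15) : sigma3 i = sigma3_idx i :> nat.
Proof.
rewrite /sigma3 /pq inordK //.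
by case: i => n; do 15?[case: n => [|n] //].
Qed.

Definition sigma3_parity (y : pred nat) : bool :=
  odd (count (fun k => (sigma3_idx k != k) && y k && y (sigma3_idx k)) (iota 0 15)).

Lemma UopE psi : Uop psi = diag (fun x => sigma3_parity (bit_at x)) psi.
Proof.
apply/ffunP => x; rewrite !ffunE prod_sign_card -signr_odd.
rewrite (@card_ord_count _ _ (fun k => (sigma3_idx k != k) && bit_at x k
                                       && bit_at x (sigma3_idx k))) // => i.
by rewrite inE -sigma3E !bit_atE andbA.
Qed.

Definition in_R (b k : nat) : bool := odd (k.+1 %/ b).
Definition in_T (j k : nat) : bool := k.+1 \in Tlist j.

Lemma cz_sign (a b : bool) :
  2^-1 * (1 + (-1) ^+ a + (-1) ^+ b - (-1) ^+ a * (-1) ^+ b) = (-1) ^+ (a && b) :> algC.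
Proof. by case: a; case: b; rewrite /= ?expr0 ?expr1; field. Qed.

Lemma logCZE a b psi :
  logCZ a b psi =
  diag (fun x => parity_in (in_T a.+1) (bit_at x) && parity_in (in_T b.+1) (bit_at x)) psi.
Proof.
have Ta i : (i \in Tset a) = in_T a.+1 i by rewrite inE.
have Tb i : (i \in Tset b) = in_T b.+1 i by rewrite inE.
apply/ffunP => x; rewrite /logCZ /logZ !(ZopE _ _ _ Ta) !(ZopE _ _ _ Tb) !ffunE -cz_sign.
by move: (_ ^+ parity_in _ _) (_ ^+ parity_in _ _) => sa sb; ring.
Qed.

Definition cz_cycle : seq (nat * nat) := [:: (2, 3); (3, 4); (4, 5); (5, 6); (6, 7); (7, 2)]%N.

Definition target_phase (y : pred nat) : bool :=
  foldr (fun jk acc => parity_in (in_T jk.1) y && parity_in (in_T jk.2) y (+) acc) false cz_cycle.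

Lemma lqK j : (0 < j <= 7)%N -> (lq j).+1 = j.
Proof. by case/andP=> j0 j7; rewrite /lq inordK ?prednK // -ltnS prednK. Qed.

Lemma targetCZE psi : targetCZ psi = diag (fun x => target_phase (bit_at x)) psi.
Proof.
rewrite /targetCZ !logCZE !diag_comp !lqK //.
by apply/ffunP => x; rewrite !ffunE /target_phase /= addbF !addbA.
Qed.

Definition hamming_codeword (y : pred nat) : bool :=
  all (fun b => ~~ parity_in (in_R b) y) [:: 1; 2; 4; 8]%N.

Lemma RsetE b (i : 'I_15) : (i \in Rset b) = in_R b i.
Proof. by rewrite inE. Qed.

Lemma in_code_support psi x : in_code psi -> ~~ hamming_codeword (bit_at x) -> psi x = 0.
Proof.
move=> code /allPn[b b_stab /negbNE odd_syndrome].
have := congr1 (fun phi : state => phi x) (code b b_stab).2.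
rewrite (ZopE _ _ _ (RsetE b)) ffunE odd_syndrome expr1 mulN1r => /eqP.
by rewrite eq_sym -subr_eq0 opprK -mulr2n mulrn_eq0 => /eqP.
Qed.

Lemma diag_in_code f psi :
  (forall b x, b \in [:: 1; 2; 4; 8]%N -> f (flip (Rset b) x) = f x) ->
  in_code psi -> in_code (diag f psi).
Proof.
move=> f_inv code b b_stab; have [X_psi Z_psi] := code b b_stab; split.
  apply/ffunP => x; rewrite !ffunE f_inv //; congr (_ * _).
  by have := congr1 (fun phi : state => phi x) X_psi; rewrite ffunE.
apply/ffunP => x; rewrite !ffunE mulrCA; congr (_ * _).
by have := congr1 (fun phi : state => phi x) Z_psi; rewrite ffunE.
Qed.

Lemma bit_at_flip b x k :
  (k < 15)%N -> bit_at (flip (Rset b) x) k = bit_at x k (+) in_R b k.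
Proof.
by move=> lt_k15; rewrite -[k]/(nat_of_ord (Ordinal lt_k15)) !bit_atE ffunE RsetE.
Qed.

Lemma parity_in_flip m b x :
  parity_in m (bit_at (flip (Rset b) x)) = parity_in m (bit_at x) (+) parity_in m (in_R b).
Proof.
rewrite /parity_in -odd_count_addb; congr odd; apply: eq_in_count => k.
by rewrite mem_iota => /andP[_ lt_k15]; rewrite /= bit_at_flip // andb_addr.
Qed.

Lemma logical_stabilizer_overlap :
  all (fun b => all (fun j => ~~ parity_in (in_T j) (in_R b)) (iota 1 7)) [:: 1; 2; 4; 8]%N.
Proof. by vm_compute. Qed.

Lemma target_phase_flip b x :
  b \in [:: 1; 2; 4; 8]%N -> target_phase (bit_at (flip (Rset b) x)) = target_phase (bit_at x).
Proof.
move=> b_stab; have /allP even_overlap := allP logical_stabilizer_overlap b b_stab.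
have even j : j \in iota 1 7 -> parity_in (in_T j) (in_R b) = false.
  by move/even_overlap/negbTE.
by rewrite /target_phase /= !parity_in_flip !even ?addbF.
Qed.

Definition in_A (k : nat) : bool := k.+1 \in [:: 1; 3; 4; 5; 6; 7]%N.
Definition Aset : {set 'I_15} := [set i : 'I_15 | in_A i].

Definition pu_phase (y : pred nat) : bool := parity_in in_A y (+) sigma3_parity y.

Lemma ZU_diag psi : Zop Aset (Uop psi) = diag (fun x => pu_phase (bit_at x)) psi.
Proof.
have Am i : (i \in Aset) = in_A i by rewrite inE.
by rewrite (ZopE _ _ _ Am) UopE diag_comp.
Qed.

Fixpoint bitstrings (n : nat) : seq (seq bool) :=
  if n is n'.+1 then [seq b :: s | b <- [:: true; false], s <- bitstrings n'] else [:: [::]].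

Lemma mem_bitstrings (s : seq bool) : s \in bitstrings (size s).
Proof.
elim: s => [|b s IH] //=.
by case: b; rewrite !mem_cat (map_f _ IH) ?orbT.
Qed.

Lemma pu_phase_on_codewords :
  all (fun s => hamming_codeword (nth false s) ==>
                (pu_phase (nth false s) == target_phase (nth false s))) (bitstrings 15).
Proof. by vm_compute. Qed.

Lemma pu_phase_codeword x :
  hamming_codeword (bit_at x) -> pu_phase (bit_at x) = target_phase (bit_at x).
Proof.
have := mem_bitstrings (fgraph x); rewrite size_tuple [in bitstrings _]card_ord.
by move=> /(allP pu_phase_on_codewords) /implyP agree /agree /eqP.
Qed.

Lemma lpauli0 psi : lpauli set0 set0 psi = psi.
Proof. by rewrite /lpauli; elim: (enum 'I_7) => //= j s ->; rewrite !inE. Qed.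

Lemma ZU_targetCZ psi : in_code psi -> Zop Aset (Uop psi) = targetCZ psi.
Proof.
move=> code; rewrite ZU_diag targetCZE; apply/ffunP => x; rewrite !ffunE.
have [codeword | non_codeword] := boolP (hamming_codeword (bit_at x)).
  by rewrite pu_phase_codeword.
by rewrite (in_code_support _ _ code non_codeword) !mulr0.
Qed.

Theorem mainTheorem9 :
  exists (A : {set 'I_15}) (ax az : {set 'I_7}) (c : algC),
    `|c| = 1 /\
    (forall psi : state, in_code psi -> in_code (Zop A (Uop psi))) /\
    (forall psi : state, in_code psi ->
       Zop A (Uop psi) = scale c (lpauli ax az (targetCZ psi))).
Proof.
exists Aset, set0, set0, 1; split; first exact: normr1.
split=> psi code; rewrite ZU_targetCZ //.
  by rewrite targetCZE; apply: diag_in_code code => b x; exact: target_phase_flip.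
rewrite lpauli0; move: (targetCZ psi) => phi.
by apply/ffunP => x; rewrite ffunE mul1r.
Qed.
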